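(* Let $f\in\mathbb R(x_1,\dots,x_n)$ be a rational function with $\mathrm{pol}(f)$ of codimension at least two in $\mathbb R^n$. Assume that the first partial derivatives $\partial_{x_1}f,\dots,\partial_{x_n}f$, seen on $\mathrm{dom}(f)$, extend continuously to $\mathbb R^n$. Then $f$ extends continuously to $\mathbb R^n$, and this extension belongs to $\mathcal R^1(\mathbb R^n)$.
   Context: For a rational function $f$ on $\mathbb R^n$, $\mathrm{dom}(f)$ is the largest Zariski open set on which $f$ is regular (of the form $p/q$ with polynomials $p,q$, $q$ nonvanishing there) and $\mathrm{pol}(f)=\mathbb R^n\setminus\mathrm{dom}(f)$. For $k\in\mathbb N\cup\{\infty\}$, $\mathcal R^k(\mathbb R^n)$ denotes the ring of functions $f:\mathbb R^n\to\mathbb R$ of class $C^k$ that coincide with a rational function on a nonempty Zariski open subset ($k$-regulous functions). *)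

From Stdlib Require Import Reals ZArith.
Open Scope R_scope.

(* Points of R^n are represented as  nat -> R ; only the coordinates i < n
   matter (all notions below only look at those coordinates). *)
Definition pt := nat -> R.

(* Polynomial functions in the variables x_0, ..., x_(n-1).
   Since R is infinite this ring is isomorphic to R[x_1,...,x_n]. *)
Inductive is_poly (n : nat) : (pt -> R) -> Prop :=
| poly_const (c : R) : is_poly n (fun _ => c)
| poly_var (i : nat) : (i < n)%nat -> is_poly n (fun x => x i)
| poly_add (p q : pt -> R) :
    is_poly n p -> is_poly n q -> is_poly n (fun x => p x + q x)
| poly_mul (p q : pt -> R) :
    is_poly n p -> is_poly n q -> is_poly n (fun x => p x * q x).

(* A rational function f in R(x_1,...,x_n) is given by a representation p/q
   with p, q polynomials and q not the zero polynomial. *)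
Definition rat_rep (n : nat) (p q : pt -> R) : Prop :=
  is_poly n p /\ is_poly n q /\ exists x, q x <> 0.

Definition same_rat (p q p' q' : pt -> R) : Prop :=
  forall x, p x * q' x = p' x * q x.

Definition in_dom (n : nat) (p q : pt -> R) (x : pt) : Prop :=
  exists p' q', is_poly n p' /\ is_poly n q' /\ same_rat p q p' q' /\ q' x <> 0.

Definition pol (n : nat) (p q : pt -> R) : pt -> Prop :=
  fun x => ~ in_dom n p q x.

Definition zariski_closed (n : nat) (C : pt -> Prop) : Prop :=
  exists S : (pt -> R) -> Prop,
    (forall g, S g -> is_poly n g) /\
    (forall x, C x <-> (forall g, S g -> g x = 0)).

Definition zariski_open (n : nat) (U : pt -> Prop) : Prop :=
  zariski_closed n (fun x => ~ U x).

Definition prime_ideal (n : nat) (P : (pt -> R) -> Prop) : Prop :=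
  (forall g, P g -> is_poly n g) /\
  P (fun _ => 0) /\
  (forall g h, P g -> P h -> P (fun x => g x + h x)) /\
  (forall g h, is_poly n g -> P h -> P (fun x => g x * h x)) /\
  ~ P (fun _ => 1) /\
  (forall g h, is_poly n g -> is_poly n h ->
     P (fun x => g x * h x) -> P g \/ P h).

Definition strict_incl (P Q : (pt -> R) -> Prop) : Prop :=
  (forall g, P g -> Q g) /\ exists g, Q g /\ ~ P g.

Definition van_ideal (n : nat) (V : pt -> Prop) : (pt -> R) -> Prop :=
  fun g => is_poly n g /\ forall x, V x -> g x = 0.

(* dim V <= d : dim V is the Krull dimension of R[x]/I(V), i.e. every chain
   P_0 < P_1 < ... < P_k of prime ideals containing I(V) has k <= d.
   (For V empty there is no such chain; dim = -infinity.) *)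
Definition alg_dim_le (n : nat) (V : pt -> Prop) (d : Z) : Prop :=
  forall (k : nat) (P : nat -> (pt -> R) -> Prop),
    (forall j, (j <= k)%nat ->
       prime_ideal n (P j) /\ (forall g, van_ideal n V g -> P j g)) ->
    (forall j, (j < k)%nat -> strict_incl (P j) (P (S j))) ->
    (Z.of_nat k <= d)%Z.

Definition codim_ge (n : nat) (V : pt -> Prop) (c : nat) : Prop :=
  alg_dim_le n V (Z.of_nat n - Z.of_nat c)%Z.

Definition shift_pt (x : pt) (i : nat) (t : R) : pt :=
  fun j => if Nat.eqb j i then x j + t else x j.

Definition continuous_Rn (n : nat) (F : pt -> R) : Prop :=
  forall x eps, 0 < eps -> exists delta, 0 < delta /\
    forall y, (forall i, (i < n)%nat -> Rabs (y i - x i) < delta) ->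
      Rabs (F y - F x) < eps.

Definition C1_Rn (n : nat) (F : pt -> R) : Prop :=
  continuous_Rn n F /\
  exists dF : nat -> pt -> R,
    (forall i, (i < n)%nat -> continuous_Rn n (dF i)) /\
    (forall i x, (i < n)%nat ->
       derivable_pt_lim (fun t => F (shift_pt x i t)) 0 (dF i x)).

Definition regulous1 (n : nat) (F : pt -> R) : Prop :=
  C1_Rn n F /\
  exists p q : pt -> R, rat_rep n p q /\
  exists U : pt -> Prop, zariski_open n U /\ (exists x, U x) /\
    forall x, U x -> exists p' q', is_poly n p' /\ is_poly n q' /\
      same_rat p q p' q' /\ q' x <> 0 /\ F x = p' x / q' x.

From Stdlib Require Import Reals ZArith Lra Lia List Classical FunctionalExtensionality.
From Coquelicot Require Import Coquelicot.
Open Scope R_scope.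

(* Restricted to a coordinate line, [p/q] is a univariate rational function whose derivative is
   locally bounded (by the continuous functions [g i]).  Such a function has no poles, so the zeros
   of the denominator on the line are removable singularities and [p/q] satisfies the mean value
   inequality along coordinate segments.  Changing one coordinate at a time inside the dense set
   [q <> 0] then shows that [p/q] is locally Lipschitz there, so it extends to a continuous locally
   Lipschitz function [F] on R^n; passing to the limit in the mean value inequality shows that the
   partial derivatives of [F] are the [g i]. *)

Lemma Rmult_frac_lt K eps : 0 <= K -> 0 < eps -> K * (eps / (K + 1)) < eps.
Proof. intros HK Heps; apply (Rmult_lt_reg_r (K + 1)); [lra|]; field_simplify; nra. Qed.

Lemma le_epsilon_scaled a b C : 0 <= C ->
  (forall eps, 0 < eps -> a <= b + C * eps) -> a <= b.
Proof.
  intros HC H; apply le_epsilon; intros eps Heps.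
  eapply Rle_trans; [apply (H (eps / (C + 1))); apply Rdiv_lt_0_compat; lra|].
  apply Rplus_le_compat_l; apply Rle_trans with ((C + 1) * (eps / (C + 1))); [|right; field; lra].
  apply Rmult_le_compat_r; [left; apply Rdiv_lt_0_compat|]; lra.
Qed.

Fixpoint horner (l : list R) (t : R) : R :=
  match l with nil => 0 | a :: m => a + t * horner m t end.

Fixpoint ladd (l1 l2 : list R) : list R :=
  match l1, l2 with
  | nil, _ => l2
  | _, nil => l1
  | a :: m1, b :: m2 => (a + b) :: ladd m1 m2
  end.

Fixpoint lmul (l1 l2 : list R) : list R :=
  match l1 with
  | nil => nil
  | a :: m => ladd (map (Rmult a) l2) (0 :: lmul m l2)
  end.

Lemma horner_add l1 l2 t : horner (ladd l1 l2) t = horner l1 t + horner l2 t.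
Proof.
  revert l2; induction l1 as [|a m IH]; intros [|b m2]; simpl; try ring.
  rewrite IH; ring.
Qed.

Lemma horner_scale c l t : horner (map (Rmult c) l) t = c * horner l t.
Proof. induction l as [|a l IH]; simpl; [|rewrite IH]; ring. Qed.

Lemma horner_mul l1 l2 t : horner (lmul l1 l2) t = horner l1 t * horner l2 t.
Proof.
  induction l1 as [|a m IH]; simpl; [ring|].
  rewrite horner_add, horner_scale; simpl; rewrite IH; ring.
Qed.

Lemma continuity_pt_horner l t : continuity_pt (horner l) t.
Proof.
  induction l as [|a l IH]; simpl.
  - apply continuity_pt_const; intros ??; reflexivity.
  - apply (continuity_pt_plus (fun _ => a) (fun t => t * horner l t)).
    + apply continuity_pt_const; intros ??; reflexivity.
    + apply (continuity_pt_mult (fun t => t)); auto.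
      apply derivable_continuous_pt, derivable_pt_id.
Qed.

Lemma horner_div_linear r l : exists l',
  (length l' <= pred (length l))%nat /\
  forall t, horner l t = horner l r + (t - r) * horner l' t.
Proof.
  induction l as [|a [|b m] IH].
  - exists nil; split; simpl; [lia | intros; ring].
  - exists nil; split; simpl; [lia | intros; ring].
  - destruct IH as [l' [Hlen Hdiv]].
    exists (horner (b :: m) r :: l'); split; [simpl in *; lia|].
    intros t. change (horner (a :: b :: m) t) with (a + t * horner (b :: m) t).
    change (horner (a :: b :: m) r) with (a + r * horner (b :: m) r).
    rewrite (Hdiv t); simpl; ring.
Qed.

Lemma horner_factor_root r l :
  (forall t, horner l t = 0) \/
  exists k l1, horner l1 r <> 0 /\ forall t, horner l t = (t - r) ^ k * horner l1 t.
Proof.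
  remember (length l) as N eqn:HN; assert (Hl : (length l <= N)%nat) by lia; clear HN.
  revert l Hl; induction N as [|N IH]; intros l Hl.
  - destruct l; [left; reflexivity | simpl in Hl; lia].
  - destruct (Req_dec_T (horner l r) 0) as [Hr|Hr].
    + destruct (horner_div_linear r l) as [l' [Hlen Hdiv]].
      destruct (IH l') as [Z | [k [l1 [Hl1 Hf]]]]; [lia| |].
      * left; intros t; rewrite Hdiv, Hr, Z; ring.
      * right; exists (S k), l1; split; auto.
        intros t; rewrite Hdiv, Hr, Hf; simpl; ring.
    + right; exists O, l; split; auto; intros; simpl; ring.
Qed.

Lemma horner_roots_finite l : (exists s, horner l s <> 0) ->
  exists rs, forall s, horner l s = 0 <-> In s rs.
Proof.
  remember (length l) as N eqn:HN; assert (Hl : (length l <= N)%nat) by lia; clear HN.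
  revert l Hl; induction N as [|N IH]; intros l Hl [s0 Hs0].
  - destruct l; [simpl in Hs0; lra | simpl in Hl; lia].
  - destruct (classic (exists r, horner l r = 0)) as [[r Hr] | Hno].
    + destruct (horner_div_linear r l) as [l' [Hlen Hdiv]].
      destruct (IH l') as [rs Hrs]; [lia | |].
      { exists s0; intros Z; apply Hs0; rewrite Hdiv, Hr, Z; ring. }
      exists (r :: rs); intros s; rewrite Hdiv, Hr, Rplus_0_l; simpl; rewrite <- Hrs; split.
      * intros H; destruct (Rmult_integral _ _ H); [left; lra | right; auto].
      * intros [<- | H]; [ring | rewrite H; ring].
    + exists nil; intros s; split; [intros Hs; exfalso; eauto | intros []].
Qed.

Lemma avoid_finite (l : list R) a b : a < b -> exists x, a < x < b /\ ~ In x l.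
Proof.
  revert a b; induction l as [|r l IH]; intros a b Hab.
  - exists ((a + b) / 2); split; [lra | simpl; auto].
  - destruct (Rle_lt_dec r ((a + b) / 2)).
    + destruct (IH ((a + b) / 2) b) as [x [Hx Hn]]; [lra|].
      exists x; split; [lra|]; intros [E|E]; [lra | auto].
    + destruct (IH a ((a + b) / 2)) as [x [Hx Hn]]; [lra|].
      exists x; split; [lra|]; intros [E|E]; [lra | auto].
Qed.

Lemma mvi_interval f c e a b : a < b ->
  (forall t, a <= t <= b -> continuity_pt f t) ->
  (forall t, a < t < b -> exists d, derivable_pt_lim f t d /\ Rabs (d - c) <= e) ->
  Rabs (f b - f a - c * (b - a)) <= e * (b - a).
Proof.
  intros Hab Hcont Hder.
  (* [MVT_gen] wants a total derivative; off (a, b) we use [c], which satisfies the bound. *)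
  set (df t := if Rlt_dec a t then if Rlt_dec t b then Derive f t else c else c).
  assert (Hdf : forall t, a < t < b ->
    exists d, is_derive f t d /\ Rabs (d - c) <= e /\ df t = d).
  { intros t Ht; destruct (Hder t Ht) as [d [Hd Hde]]; apply is_derive_Reals in Hd.
    exists d; split; [auto | split; [auto|]].
    unfold df; destruct (Rlt_dec a t), (Rlt_dec t b); try lra; apply is_derive_unique; auto. }
  assert (He : 0 <= e).
  { destruct (Hdf ((a + b) / 2)) as [d [_ [H _]]]; [lra|].
    eapply Rle_trans; [apply Rabs_pos | exact H]. }
  assert (Hdfc : forall t, Rabs (df t - c) <= e).
  { intros t; destruct (Rlt_dec a t), (Rlt_dec t b);
      [destruct (Hdf t) as [d [_ [H ->]]]; auto |
       unfold df; destruct (Rlt_dec a t), (Rlt_dec t b); try lra;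
       rewrite Rminus_diag, Rabs_R0; auto ..]. }
  destruct (MVT_gen f a b df) as [t [Ht Hmvt]]; rewrite ?Rmin_left, ?Rmax_right in * by lra.
  - intros t Ht; destruct (Hdf t Ht) as [d [Hd [_ ->]]]; auto.
  - auto.
  - rewrite Hmvt, <- Rmult_minus_distr_r, Rabs_mult, (Rabs_right (b - a)) by lra.
    apply Rmult_le_compat_r; [lra | apply Hdfc].
Qed.

Lemma derivative_bound_lipschitz f M a b :
  (forall t, a < t < b -> exists d, derivable_pt_lim f t d /\ Rabs d <= M) ->
  forall s t, a < s < b -> a < t < b -> Rabs (f t - f s) <= M * Rabs (t - s).
Proof.
  intros Hder.
  assert (Hlip : forall s t, a < s < b -> a < t < b -> s < t -> Rabs (f t - f s) <= M * Rabs (t - s)).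
  { intros s t Hs Ht Hst; rewrite (Rabs_right (t - s)) by lra.
    replace (f t - f s) with (f t - f s - 0 * (t - s)) by ring.
    apply mvi_interval; auto.
    - intros u Hu; destruct (Hder u) as [d [Hd _]]; [lra|].
      apply derivable_continuous_pt; exists d; auto.
    - intros u Hu; destruct (Hder u) as [d [Hd HdM]]; [lra|].
      exists d; rewrite Rminus_0_r; auto. }
  intros s t Hs Ht; destruct (Rtotal_order s t) as [Hst | [-> | Hst]].
  - auto.
  - rewrite !Rminus_diag, Rabs_R0, Rmult_0_r; lra.
  - rewrite (Rabs_minus_sym (f t)), (Rabs_minus_sym t); auto.
Qed.

Definition punctured_lim (f : R -> R) (r L : R) : Prop :=
  forall eps, 0 < eps -> exists del, 0 < del /\
    forall t, t <> r -> Rabs (t - r) < del -> Rabs (f t - L) < eps.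

Definition update (f : R -> R) (r L : R) (t : R) : R :=
  if Req_dec_T t r then L else f t.

Section EqualNear.

Variables (f h : R -> R) (t0 del : R).
Hypothesis Hdel : 0 < del.
Hypothesis Heq : forall t, Rabs (t - t0) < del -> h t = f t.

Lemma derivable_pt_lim_eq_near d : derivable_pt_lim f t0 d -> derivable_pt_lim h t0 d.
Proof.
  intros Hd eps Heps; destruct (Hd eps Heps) as [d' Hd'].
  assert (Hpos : 0 < Rmin del d') by (apply Rmin_pos; [auto | apply cond_pos]).
  exists (mkposreal _ Hpos); intros u Hu Hud; simpl in Hud.
  assert (Hud' : Rabs u < del) by (eapply Rlt_le_trans; [exact Hud | apply Rmin_l]).
  rewrite !Heq; [apply Hd'; [auto | eapply Rlt_le_trans; [exact Hud | apply Rmin_r]] | |].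
  - rewrite Rminus_diag, Rabs_R0; auto.
  - replace (t0 + u - t0) with u by ring; auto.
Qed.

Lemma continuity_pt_eq_near : continuity_pt f t0 -> continuity_pt h t0.
Proof.
  intros Hc; apply continuity_pt_filterlim; apply continuity_pt_filterlim in Hc.
  rewrite (Heq t0) by (rewrite Rminus_diag, Rabs_R0; auto).
  apply (filterlim_ext_loc f); auto.
  exists (mkposreal _ Hdel); intros t Ht; symmetry; apply Heq, Ht.
Qed.

Lemma punctured_lim_eq_near L : punctured_lim f t0 L -> punctured_lim h t0 L.
Proof.
  intros Hl eps Heps; destruct (Hl eps Heps) as [d [Hd Ht]].
  exists (Rmin d del); split; [apply Rmin_pos; auto|]; intros t Htr Htd.
  rewrite Heq by (eapply Rlt_le_trans; [exact Htd | apply Rmin_r]).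
  apply Ht; auto; eapply Rlt_le_trans; [exact Htd | apply Rmin_l].
Qed.

End EqualNear.

Lemma mvi_finite_exceptions (l : list R) f c e : forall a b, a < b ->
  (forall t, a <= t <= b -> continuity_pt f t) ->
  (forall t, a < t < b -> ~ In t l -> exists d, derivable_pt_lim f t d /\ Rabs (d - c) <= e) ->
  Rabs (f b - f a - c * (b - a)) <= e * (b - a).
Proof.
  induction l as [|r l IH]; intros a b Hab Hcont Hder.
  - apply mvi_interval; auto.
  - assert (Hpiece : forall a' b', a <= a' < b' -> b' <= b -> ~ (a' < r < b') ->
      Rabs (f b' - f a' - c * (b' - a')) <= e * (b' - a')).
    { intros a' b' Ha' Hb' Hr; apply IH; [lra | intros; apply Hcont; lra |].
      intros t Ht Hn; apply Hder; [lra|]; intros [<- | E]; [lra | auto]. }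
    destruct (classic (a < r < b)) as [Hr | Hr]; [|apply Hpiece; auto; lra].
    replace (f b - f a - c * (b - a))
      with ((f r - f a - c * (r - a)) + (f b - f r - c * (b - r))) by ring.
    eapply Rle_trans; [apply Rabs_triang|].
    replace (e * (b - a)) with (e * (r - a) + e * (b - r)) by ring.
    apply Rplus_le_compat; apply Hpiece; lra.
Qed.

Lemma update_eq_near f r L t : t <> r ->
  forall u, Rabs (u - t) < Rabs (t - r) -> update f r L u = f u.
Proof.
  intros Htr u Hu; unfold update; destruct (Req_dec_T u r) as [->|]; auto.
  rewrite Rabs_minus_sym in Hu; lra.
Qed.

Lemma punctured_lim_update f r L : punctured_lim f r L -> punctured_lim (update f r L) r L.
Proof.
  intros Hl eps Heps; destruct (Hl eps Heps) as [d [Hd Ht]]; exists d; split; auto.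
  intros t Htr Htd; unfold update; destruct (Req_dec_T t r); [contradiction | auto].
Qed.

Lemma continuity_pt_update f r L : punctured_lim f r L -> continuity_pt (update f r L) r.
Proof.
  intros Hl eps Heps; destruct (punctured_lim_update f r L Hl eps Heps) as [d [Hd Ht]].
  exists d; split; auto; intros t [[_ Htr] Htd].
  replace (update f r L r) with L by (unfold update; destruct (Req_dec_T r r); tauto).
  apply Ht; auto.
Qed.

(* A function with finitely many removable singularities in [a, b] satisfies the mean value
   inequality: redefining it at a singularity by its limit changes neither the endpoint
   values nor the derivatives at the other points. *)
Lemma mvi_removable (D l : list R) : forall f c e a b, a < b -> incl l D ->
  (forall t, a <= t <= b -> ~ In t l -> continuity_pt f t) ->
  (forall t, a < t < b -> ~ In t D -> exists d, derivable_pt_lim f t d /\ Rabs (d - c) <= e) ->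
  (forall r, In r l -> a <= r <= b -> a < r < b /\ exists L, punctured_lim f r L) ->
  Rabs (f b - f a - c * (b - a)) <= e * (b - a).
Proof.
  induction l as [|r l IH]; intros f c e a b Hab Hincl Hcont Hder Hrem.
  - apply (mvi_finite_exceptions D); auto.
  - assert (HrD : In r D) by (apply Hincl; left; auto).
    assert (Hincl' : incl l D) by (intros x Hx; apply Hincl; right; auto).
    destruct (classic (a <= r <= b)) as [Hr | Hr].
    + destruct (Hrem r (or_introl eq_refl) Hr) as [Hr' [L HL]].
      set (h := update f r L).
      assert (Hnear : forall t, t <> r -> 0 < Rabs (t - r) /\
        forall u, Rabs (u - t) < Rabs (t - r) -> h u = f u).
      { intros t Htr; split; [apply Rabs_pos_lt; lra | apply update_eq_near; auto]. }
      replace (f b - f a) with (h b - h a)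
        by (unfold h, update; destruct (Req_dec_T b r), (Req_dec_T a r); lra).
      apply (IH h); auto.
      * intros t Ht Hn; destruct (Req_dec_T t r) as [-> | Htr].
        { apply continuity_pt_update; auto. }
        destruct (Hnear t Htr) as [Hpos Heq]; apply (continuity_pt_eq_near f h t _ Hpos Heq).
        apply Hcont; auto; intros [E|E]; auto.
      * intros t Ht Hn; assert (Htr : t <> r) by (intros ->; auto).
        destruct (Hder t Ht Hn) as [d [Hd Hde]]; exists d; split; auto.
        destruct (Hnear t Htr) as [Hpos Heq]; apply (derivable_pt_lim_eq_near f h t _ Hpos Heq); auto.
      * intros r' Hr'l Hr'ab; destruct (Hrem r' (or_intror Hr'l) Hr'ab) as [Hint [L' HL']].
        split; auto; destruct (Req_dec_T r' r) as [-> | Hne].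
        { exists L; apply punctured_lim_update; auto. }
        exists L'; destruct (Hnear r' Hne) as [Hpos Heq];
          apply (punctured_lim_eq_near f h r' _ Hpos Heq); auto.
    + apply IH; auto.
      * intros t Ht Hn; apply Hcont; auto; intros [E|E]; [subst; auto | auto].
      * intros r' Hr' Hr''; apply Hrem; [right|]; auto.
Qed.

Lemma continuity_pt_nonzero_near h r : continuity_pt h r -> h r <> 0 ->
  exists del, 0 < del /\ forall t, Rabs (t - r) < del -> h t <> 0.
Proof.
  intros Hc Hr; assert (Hpos : 0 < Rabs (h r)) by (apply Rabs_pos_lt; auto).
  destruct (Hc (Rabs (h r)) Hpos) as [del [Hdel Ht]]; exists del; split; auto.
  intros t Htr E; destruct (Req_dec_T t r) as [-> | Hne]; [auto|].
  assert (H := Ht t (conj (conj I (not_eq_sym Hne)) Htr)); simpl in H; unfold R_dist in H.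
  rewrite E, Rminus_0_l, Rabs_Ropp in H; lra.
Qed.

Lemma continuity_pt_vanishing_right h r B d : continuity_pt h r -> 0 < d ->
  (forall t, r < t < r + d -> Rabs (h t) <= B * (t - r)) -> h r = 0.
Proof.
  intros Hc Hd Hb; apply Rabs_eq_0, Rle_antisym; [|apply Rabs_pos].
  apply le_epsilon; intros eps Heps; rewrite Rplus_0_l.
  destruct (Hc (eps / 2)) as [del [Hdel Ht]]; [lra|].
  set (bound := eps / 2 / (Rabs B + 1)).
  assert (Hbound : 0 < bound) by (apply Rdiv_lt_0_compat; [|pose proof (Rabs_pos B)]; lra).
  set (s := Rmin (Rmin del d) bound / 2).
  assert (Hs : 0 < s /\ s < del /\ s < d /\ s <= bound).
  { unfold s; pose proof (Rmin_l (Rmin del d) bound); pose proof (Rmin_r (Rmin del d) bound).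
    pose proof (Rmin_l del d); pose proof (Rmin_r del d).
    pose proof (Rmin_pos _ _ (Rmin_pos _ _ Hdel Hd) Hbound); lra. }
  assert (Hnear : Rabs (h (r + s) - h r) < eps / 2).
  { apply (Ht (r + s)); split; [split; [exact I | lra]|].
    simpl; unfold R_dist; replace (r + s - r) with s by ring; rewrite Rabs_right; lra. }
  assert (Hsmall : Rabs (h (r + s)) <= Rabs B * bound).
  { apply Rle_trans with (B * s).
    - replace s with (r + s - r) at 2 by ring; apply Hb; lra.
    - apply Rle_trans with (Rabs B * s);
        [apply Rmult_le_compat_r; [lra | apply Rle_abs] |
         apply Rmult_le_compat_l; [apply Rabs_pos | lra]]. }
  pose proof (Rmult_frac_lt (Rabs B) (eps / 2) (Rabs_pos B) ltac:(lra)).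
  pose proof (Rabs_triang_inv (h r) (h (r + s))); rewrite Rabs_minus_sym in Hnear.
  unfold bound in *; lra.
Qed.

Definition ratfun (P Q : list R) (t : R) : R := horner P t / horner Q t.

(* A univariate rational function whose derivative stays bounded on one side of [r] has a limit
   at [r]: a genuine pole would make it unbounded there. *)
Lemma ratfun_punctured_lim P Q r d M : (exists s, horner Q s <> 0) -> 0 < d ->
  (forall t, r < t < r + d -> horner Q t <> 0 ->
     exists D, derivable_pt_lim (ratfun P Q) t D /\ Rabs D <= M) ->
  exists L, punctured_lim (ratfun P Q) r L.
Proof.
  intros [s0 Hs0] Hd Hder.
  destruct (horner_factor_root r Q) as [HQ | [k [Q1 [HQ1 HQ]]]]; [now exfalso; apply Hs0|].
  destruct (continuity_pt_nonzero_near _ r (continuity_pt_horner Q1 r) HQ1) as [d1 [Hd1 HQ1near]].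
  assert (HQnear : forall t, t <> r -> Rabs (t - r) < d1 -> horner Q t <> 0).
  { intros t Htr Ht; rewrite HQ; apply Rmult_integral_contrapositive_currified;
      [apply pow_nonzero; lra | auto]. }
  destruct (horner_factor_root r P) as [HP | [kP [P1 [HP1 HP]]]].
  { exists 0; intros eps Heps; exists 1; split; [lra|]; intros t _ _.
    unfold ratfun; rewrite HP, Rdiv_0_l, Rminus_0_r, Rabs_R0; auto. }
  assert (Hcont1 : continuity_pt (fun t => horner P1 t / horner Q1 t) r)
    by (apply continuity_pt_div; auto using continuity_pt_horner).
  destruct (le_lt_dec k kP) as [Hk | Hk].
  - set (psi t := (t - r) ^ (kP - k) * (horner P1 t / horner Q1 t)).
    assert (Hpsi : continuity_pt psi r).
    { apply (continuity_pt_mult (fun t => (t - r) ^ (kP - k))); auto.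
      apply continuity_pt_filterlim, (ex_derive_continuous (fun t => (t - r) ^ (kP - k))).
      auto_derive; auto. }
    exists (psi r); intros eps Heps; destruct (Hpsi eps Heps) as [d2 [Hd2 Hpsi2]].
    exists (Rmin d1 d2); split; [apply Rmin_pos; auto|]; intros t Htr Ht.
    assert (Ht1 : Rabs (t - r) < d1) by (eapply Rlt_le_trans; [exact Ht | apply Rmin_l]).
    replace (ratfun P Q t) with (psi t).
    + apply (Hpsi2 t); split; [split; [exact I | auto]|].
      eapply Rlt_le_trans; [exact Ht | apply Rmin_r].
    + unfold psi, ratfun; rewrite HP, HQ.
      replace ((t - r) ^ kP) with ((t - r) ^ (kP - k) * (t - r) ^ k)
        by (rewrite <- pow_add; f_equal; lia).
      field; split; [apply HQ1near; auto | apply pow_nonzero; lra].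
  - exfalso; apply HP1.
    set (d2 := Rmin (Rmin d d1) 1).
    assert (Hd2 : 0 < d2 /\ d2 <= d /\ d2 <= d1 /\ d2 <= 1).
    { unfold d2; pose proof (Rmin_l (Rmin d d1) 1); pose proof (Rmin_r (Rmin d d1) 1).
      pose proof (Rmin_l d d1); pose proof (Rmin_r d d1).
      repeat split; try lra; repeat apply Rmin_pos; lra. }
    set (s := r + d2 / 2); set (B := Rabs (ratfun P Q s) + Rabs M * d2).
    assert (Hbound : forall t, r < t < r + d2 -> Rabs (ratfun P Q t) <= B).
    { intros t Ht.
      assert (Hlip := derivative_bound_lipschitz (ratfun P Q) (Rabs M) r (r + d2)).
      assert (H : Rabs (ratfun P Q t - ratfun P Q s) <= Rabs M * Rabs (t - s)).
      { apply Hlip; unfold s; try lra.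
        intros u Hu; destruct (Hder u) as [D [HD HDM]]; [lra | apply HQnear; rewrite ?Rabs_right; lra|].
        exists D; split; [auto | eapply Rle_trans; [exact HDM | apply Rle_abs]]. }
      assert (Rabs M * Rabs (t - s) <= Rabs M * d2)
        by (apply Rmult_le_compat_l; [apply Rabs_pos | apply Rabs_le; unfold s; lra]).
      pose proof (Rabs_triang_inv (ratfun P Q t) (ratfun P Q s)); unfold B; lra. }
    replace (horner P1 r) with (horner P1 r / horner Q1 r * horner Q1 r) by (field; auto).
    rewrite (continuity_pt_vanishing_right _ r B d2 Hcont1), Rmult_0_l; [auto | lra |].
    intros t Ht.
    assert (Hm : horner P1 t / horner Q1 t = (t - r) * ((t - r) ^ (k - kP - 1) * ratfun P Q t)).
    { unfold ratfun; rewrite HP, HQ.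
      replace ((t - r) ^ k) with ((t - r) * (t - r) ^ (k - kP - 1) * (t - r) ^ kP)
        by (rewrite tech_pow_Rmult, <- pow_add; f_equal; lia).
      assert (t - r <> 0) by lra.
      field; repeat split; try apply pow_nonzero; auto; apply HQ1near; rewrite Rabs_right; lra. }
    rewrite Hm, Rabs_mult, Rabs_mult, (Rabs_right (t - r)) by lra.
    rewrite Rmult_comm; apply Rmult_le_compat_r; [lra|].
    rewrite <- (Rmult_1_l B); apply Rmult_le_compat; try apply Rabs_pos; [| apply Hbound; lra].
    rewrite <- RPow_abs, Rabs_right by lra.
    destruct (k - kP - 1)%nat as [|m] eqn:Em; [simpl; lra|].
    apply Rlt_le, pow_lt_1_compat; [lra | lia].
Qed.

Definition box (n : nat) (x : pt) (d : R) (y : pt) : Prop :=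
  forall j, (j < n)%nat -> Rabs (y j - x j) < d.

Definition box_nbhd (n : nat) (x : pt) (A : pt -> Prop) : Prop :=
  exists d, 0 < d /\ forall y, box n x d y -> A y.

Lemma box_mono n x d d' y : d <= d' -> box n x d y -> box n x d' y.
Proof. intros H Hb j Hj; specialize (Hb j Hj); lra. Qed.

#[local] Instance box_nbhd_filter n x : Filter (box_nbhd n x).
Proof.
  constructor.
  - exists 1; split; [lra | auto].
  - intros A B [d1 [Hd1 HA]] [d2 [Hd2 HB]]; exists (Rmin d1 d2); split; [apply Rmin_pos; auto|].
    intros y Hy; split; [apply HA | apply HB]; eapply box_mono; eauto; [apply Rmin_l | apply Rmin_r].
  - intros A B HAB [d [Hd HA]]; exists d; split; auto.
Qed.

Lemma filterlim_box_nbhd n F x :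
  filterlim F (box_nbhd n x) (locally (F x)) <->
  forall eps, 0 < eps -> exists d, 0 < d /\ forall y, box n x d y -> Rabs (F y - F x) < eps.
Proof.
  rewrite filterlim_locally; split.
  - intros H eps Heps; exact (H (mkposreal _ Heps)).
  - intros H [eps Heps]; exact (H eps Heps).
Qed.

Lemma filterlim_poly n r x : is_poly n r -> filterlim r (box_nbhd n x) (locally (r x)).
Proof.
  induction 1 as [c | i Hi | p q _ IHp _ IHq | p q _ IHp _ IHq].
  - apply filterlim_const.
  - apply filterlim_box_nbhd; intros eps Heps; exists eps; split; auto.
  - eapply (filterlim_comp_2 p q Rplus); [exact IHp | exact IHq | apply (filterlim_plus (p x) (q x))].
  - eapply (filterlim_comp_2 p q Rmult); [exact IHp | exact IHq | apply (filterlim_mult (p x) (q x))].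
Qed.

Lemma filterlim_div n F G x : G x <> 0 ->
  filterlim F (box_nbhd n x) (locally (F x)) -> filterlim G (box_nbhd n x) (locally (G x)) ->
  filterlim (fun y => F y / G y) (box_nbhd n x) (locally (F x / G x)).
Proof.
  intros HGx HF HG; eapply (filterlim_comp_2 F (fun y => / G y) Rmult); [exact HF | |].
  - apply (filterlim_comp _ _ _ G Rinv _ (locally (G x))); auto.
    apply (continuity_pt_filterlim Rinv).
    apply (continuity_pt_inv (fun t => t)); auto; apply derivable_continuous_pt, derivable_pt_id.
  - apply (filterlim_mult (F x) (/ G x)).
Qed.

Definition dense_in (n : nat) (D : pt -> Prop) : Prop :=
  forall x d, 0 < d -> exists y, D y /\ box n x d y.

Definition locally_lipschitz_on (n : nat) (D : pt -> Prop) (f : pt -> R) : Prop :=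
  forall x, exists d K, 0 < d /\ 0 <= K /\ forall y z rho, D y -> D z ->
    box n x d y -> box n x d z -> (forall j, (j < n)%nat -> Rabs (y j - z j) <= rho) ->
    Rabs (f y - f z) <= K * rho.

Lemma box_trans n x y z d1 d2 : box n x d1 y -> box n y d2 z -> box n x (d1 + d2) z.
Proof.
  intros Hy Hz j Hj; specialize (Hy j Hj); specialize (Hz j Hj).
  replace (z j - x j) with ((z j - y j) + (y j - x j)) by ring.
  eapply Rle_lt_trans; [apply Rabs_triang | lra].
Qed.

Lemma shift_pt_0 x i : shift_pt x i 0 = x.
Proof. apply functional_extensionality; intros j; unfold shift_pt; destruct (Nat.eqb j i); ring. Qed.

Lemma shift_pt_shift x i a b : shift_pt (shift_pt x i a) i b = shift_pt x i (a + b).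
Proof. apply functional_extensionality; intros j; unfold shift_pt; destruct (Nat.eqb j i); ring. Qed.

Lemma shift_pt_same x i s : shift_pt x i s i = x i + s.
Proof. unfold shift_pt; rewrite Nat.eqb_refl; auto. Qed.

Lemma shift_pt_other x i s j : j <> i -> shift_pt x i s j = x j.
Proof. intros H; unfold shift_pt; destruct (Nat.eqb_spec j i); [contradiction | auto]. Qed.

Lemma Rabs_between_0 s t : Rmin 0 t <= s <= Rmax 0 t -> Rabs s <= Rabs t.
Proof.
  intros Hs; destruct (Rle_dec 0 t).
  - rewrite Rmin_left, Rmax_right in Hs by lra; rewrite !Rabs_right; lra.
  - rewrite Rmin_right, Rmax_left in Hs by lra; rewrite !Rabs_left1; lra.
Qed.

Lemma box_shift_pt n x d w i s : box n x d w -> Rabs (w i + s - x i) < d ->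
  box n x d (shift_pt w i s).
Proof.
  intros Hw Hs j Hj; destruct (Nat.eq_dec j i) as [-> | Hne].
  - rewrite shift_pt_same; auto.
  - rewrite shift_pt_other; auto.
Qed.

Lemma poly_on_line n r : is_poly n r ->
  forall y i, exists l, forall s, r (shift_pt y i s) = horner l s.
Proof.
  induction 1 as [c | k Hk | p q _ IHp _ IHq | p q _ IHp _ IHq]; intros y i.
  - exists (c :: nil); intros; simpl; ring.
  - unfold shift_pt; destruct (Nat.eqb k i).
    + exists (y k :: 1 :: nil); intros; simpl; ring.
    + exists (y k :: nil); intros; simpl; ring.
  - destruct (IHp y i) as [l1 H1], (IHq y i) as [l2 H2].
    exists (ladd l1 l2); intros; rewrite horner_add, H1, H2; auto.
  - destruct (IHp y i) as [l1 H1], (IHq y i) as [l2 H2].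
    exists (lmul l1 l2); intros; rewrite horner_mul, H1, H2; auto.
Qed.

Lemma exists_nonroot_on_line n r y i a b : is_poly n r -> r y <> 0 -> a < b ->
  exists t, a < t < b /\ r (shift_pt y i t) <> 0.
Proof.
  intros Hr Hy Hab; destruct (poly_on_line n r Hr y i) as [l Hl].
  destruct (horner_roots_finite l) as [rs Hrs]; [exists 0; rewrite <- Hl, shift_pt_0; auto|].
  destruct (avoid_finite rs a b Hab) as [t [Ht Hn]]; exists t; split; auto.
  rewrite Hl, Hrs; auto.
Qed.

Lemma dense_nonroots n r a0 : is_poly n r -> r a0 <> 0 -> dense_in n (fun y => r y <> 0).
Proof.
  intros Hr Ha0 x d Hd.
  (* move the coordinates of [a0] towards [x] one at a time, avoiding the zeros of [r] *)
  assert (H : forall k, exists w, r w <> 0 /\ forall j, (j < k)%nat -> Rabs (w j - x j) < d).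
  { induction k as [|k [w [Hw Hwk]]].
    - exists a0; split; auto; intros; lia.
    - destruct (exists_nonroot_on_line n r w k (x k - w k - d) (x k - w k + d)) as [t [Ht Hrt]];
        auto; [lra|].
      exists (shift_pt w k t); split; auto.
      intros j Hj; destruct (Nat.eq_dec j k) as [-> | Hne].
      + rewrite shift_pt_same; apply Rabs_def1; lra.
      + rewrite shift_pt_other by auto; apply Hwk; lia. }
  destruct (H n) as [y [Hy Hb]]; exists y; split; auto.
Qed.

Lemma locally_bounded_family n (g : nat -> pt -> R) x :
  (forall i, (i < n)%nat -> continuous_Rn n (g i)) ->
  exists d M, 0 < d /\ 0 <= M /\ forall i u, (i < n)%nat -> box n x d u -> Rabs (g i u) <= M.
Proof.
  intros Hg.
  enough (H : forall k, (k <= n)%nat -> exists d M, 0 < d /\ 0 <= M /\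
    forall i u, (i < k)%nat -> box n x d u -> Rabs (g i u) <= M) by (apply H; lia).
  induction k as [|k IH]; intros Hk.
  - exists 1, 0; repeat split; [lra | lra | intros; lia].
  - destruct IH as [d [M [Hd [HM Hb]]]]; [lia|].
    destruct (Hg k Hk x 1) as [dk [Hdk Hbk]]; [lra|].
    exists (Rmin d dk), (Rmax M (Rabs (g k x) + 1)); repeat split.
    + apply Rmin_pos; auto.
    + eapply Rle_trans; [exact HM | apply Rmax_l].
    + intros i u Hi Hu; destruct (Nat.eq_dec i k) as [-> | Hne].
      * apply Rle_trans with (Rabs (g k x) + 1); [|apply Rmax_r].
        assert (Rabs (g k u - g k x) < 1) by (apply Hbk; eapply box_mono; [apply Rmin_r | exact Hu]).
        pose proof (Rabs_triang_inv (g k u) (g k x)); lra.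
      * eapply Rle_trans; [apply Hb; [lia | eapply box_mono; [apply Rmin_l | exact Hu]] | apply Rmax_l].
Qed.

Definition ratio (p q : pt -> R) (x : pt) : R := p x / q x.

Section RatioAlongLines.

Variables (n : nat) (p q : pt -> R) (g : nat -> pt -> R).
Hypothesis Hp : is_poly n p.
Hypothesis Hq : is_poly n q.
Hypothesis Hder : forall i x, (i < n)%nat -> q x <> 0 ->
  derivable_pt_lim (fun t => p (shift_pt x i t) / q (shift_pt x i t)) 0 (g i x).

Lemma derivable_ratio_line w i t : (i < n)%nat -> q (shift_pt w i t) <> 0 ->
  derivable_pt_lim (fun s => ratio p q (shift_pt w i s)) t (g i (shift_pt w i t)).
Proof.
  intros Hi Hqt eps Heps; destruct (Hder i _ Hi Hqt eps Heps) as [del Hdel].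
  exists del; intros h Hh Hhd; specialize (Hdel h Hh Hhd).
  unfold ratio; rewrite !shift_pt_shift, Rplus_0_r, Rplus_0_l in Hdel; auto.
Qed.

Lemma ratio_segment_mvi w i a b c e : (i < n)%nat -> a < b ->
  q (shift_pt w i a) <> 0 -> q (shift_pt w i b) <> 0 ->
  (forall s, a <= s <= b -> Rabs (g i (shift_pt w i s) - c) <= e) ->
  Rabs (ratio p q (shift_pt w i b) - ratio p q (shift_pt w i a) - c * (b - a)) <= e * (b - a).
Proof.
  intros Hi Hab Ha Hb Hgc.
  destruct (poly_on_line n p Hp w i) as [P HP].
  destruct (poly_on_line n q Hq w i) as [Q HQ].
  destruct (horner_roots_finite Q) as [rs Hrs]; [exists a; rewrite <- HQ; auto|].
  assert (Hphi : (fun s => ratio p q (shift_pt w i s)) = ratfun P Q)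
    by (apply functional_extensionality; intros; unfold ratio, ratfun; rewrite HP, HQ; auto).
  assert (Hderphi : forall t, ~ In t rs -> derivable_pt_lim (ratfun P Q) t (g i (shift_pt w i t))).
  { intros t Ht; rewrite <- Hphi; apply derivable_ratio_line; auto; rewrite HQ, Hrs; auto. }
  change (ratio p q (shift_pt w i b)) with ((fun s => ratio p q (shift_pt w i s)) b).
  change (ratio p q (shift_pt w i a)) with ((fun s => ratio p q (shift_pt w i s)) a).
  rewrite Hphi; apply (mvi_removable rs rs); auto using incl_refl.
  - intros t Ht Hn; apply derivable_continuous_pt; eexists; apply Hderphi; auto.
  - intros t Ht Hn; eexists; split; [apply Hderphi; auto | apply Hgc; lra].
  - intros r Hr Hrab; rewrite <- Hrs, <- HQ in Hr.
    assert (Hint : a < r < b)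
      by (destruct Hrab as [[Har | <-] [Hrb | ->]]; [lra | contradiction ..]).
    split; [auto|].
    apply (ratfun_punctured_lim P Q r (b - r) (Rabs c + e)); [exists a; rewrite <- HQ; auto | lra |].
    + intros t Ht HQt; exists (g i (shift_pt w i t)); split.
      * apply Hderphi; rewrite <- Hrs; auto.
      * replace (g i (shift_pt w i t)) with (c + (g i (shift_pt w i t) - c)) by ring.
        eapply Rle_trans; [apply Rabs_triang | apply Rplus_le_compat_l, Hgc; lra].
Qed.

Lemma ratio_line_mvi w i h c e : (i < n)%nat -> q w <> 0 -> q (shift_pt w i h) <> 0 ->
  (forall s, Rmin 0 h <= s <= Rmax 0 h -> Rabs (g i (shift_pt w i s) - c) <= e) ->
  Rabs (ratio p q (shift_pt w i h) - ratio p q w - c * h) <= e * Rabs h.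
Proof.
  intros Hi Hw Hwh Hgc.
  assert (Hw0 : q (shift_pt w i 0) <> 0) by (rewrite shift_pt_0; auto).
  replace (ratio p q w) with (ratio p q (shift_pt w i 0)) by (rewrite shift_pt_0; auto).
  destruct (Rtotal_order h 0) as [Hneg | [-> | Hpos]].
  - rewrite Rmin_right, Rmax_left in Hgc by lra.
    rewrite (Rabs_left h) by lra.
    replace (ratio p q (shift_pt w i h) - ratio p q (shift_pt w i 0) - c * h)
      with (- (ratio p q (shift_pt w i 0) - ratio p q (shift_pt w i h) - c * (0 - h))) by ring.
    rewrite Rabs_Ropp; replace (e * - h) with (e * (0 - h)) by ring.
    apply ratio_segment_mvi; auto.
  - rewrite Rminus_diag, Rmult_0_r, Rminus_0_r, Rabs_R0, Rmult_0_r; lra.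
  - rewrite Rmin_left, Rmax_right in Hgc by lra.
    rewrite (Rabs_right h) by lra.
    replace (c * h) with (c * (h - 0)) by ring; replace (e * h) with (e * (h - 0)) by ring.
    apply ratio_segment_mvi; auto.
Qed.

Section Staircase.

Variables (x : pt) (d M : R).
Hypothesis HM0 : 0 <= M.
Hypothesis HM : forall i u, (i < n)%nat -> box n x d u -> Rabs (g i u) <= M.

Lemma ratio_coordinate_step w k v eta : (k < n)%nat -> q w <> 0 -> box n x d w ->
  Rabs (v - x k) < d -> 0 < eta ->
  exists t, q (shift_pt w k t) <> 0 /\ box n x d (shift_pt w k t) /\ Rabs (w k + t - v) < eta /\
    Rabs (ratio p q (shift_pt w k t) - ratio p q w) <= M * (Rabs (v - w k) + eta).
Proof.
  intros Hk Hw Hbw Hv Heta.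
  assert (Hwk := Hbw k Hk); apply Rabs_def2 in Hwk; apply Rabs_def2 in Hv.
  set (lo := Rmax (v - eta) (x k - d)); set (hi := Rmin (v + eta) (x k + d)).
  assert (Hlo : v - eta <= lo /\ x k - d <= lo) by (split; [apply Rmax_l | apply Rmax_r]).
  assert (Hhi : hi <= v + eta /\ hi <= x k + d) by (split; [apply Rmin_l | apply Rmin_r]).
  assert (Hlohi : lo < hi) by (apply Rmax_lub_lt; apply Rmin_glb_lt; lra).
  destruct (exists_nonroot_on_line n q w k (lo - w k) (hi - w k)) as [t [Ht Hqt]]; auto; [lra|].
  exists t; split; [auto | split; [apply box_shift_pt; auto; apply Rabs_def1; lra | split]].
  { apply Rabs_def1; lra. }
  replace (ratio p q (shift_pt w k t) - ratio p q w)
    with (ratio p q (shift_pt w k t) - ratio p q w - 0 * t) by ring.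
  eapply Rle_trans; [apply ratio_line_mvi; auto|].
  - intros s Hs; rewrite Rminus_0_r; apply HM; auto; apply box_shift_pt; auto.
    destruct (Rle_dec 0 t);
      [rewrite Rmin_left, Rmax_right in Hs | rewrite Rmin_right, Rmax_left in Hs];
      try apply Rabs_def1; lra.
  - apply Rmult_le_compat_l; auto.
    replace t with ((w k + t - v) + (v - w k)) at 1 by ring.
    eapply Rle_trans; [apply Rabs_triang|].
    assert (Rabs (w k + t - v) < eta) by (apply Rabs_def1; lra); lra.
Qed.

(* Change the coordinates of [y] into (approximately) those of [z] one at a time, along lines
   through points of [q <> 0]; each move costs at most [M] times its length. *)
Lemma ratio_staircase y z rho eta : q y <> 0 -> box n x d y -> box n x d z -> 0 < eta ->
  (forall j, (j < n)%nat -> Rabs (y j - z j) <= rho) ->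
  forall k, (k <= n)%nat -> exists w, q w <> 0 /\ box n x d w /\
    (forall j, (k <= j)%nat -> w j = y j) /\ (forall j, (j < k)%nat -> Rabs (w j - z j) < eta) /\
    Rabs (ratio p q w - ratio p q y) <= INR k * M * (rho + eta).
Proof.
  intros Hy Hby Hbz Heta Hrho; induction k as [|k IH]; intros Hk.
  - exists y; split; [auto | split; [auto | split; [auto | split; [intros; lia |]]]].
    rewrite Rminus_diag, Rabs_R0; simpl; lra.
  - destruct IH as [w [Hw [Hbw [Hwy [Hwz Hf]]]]]; [lia|].
    destruct (ratio_coordinate_step w k (z k) eta) as [t [Hqt [Hbt [Htz Hft]]]];
      [lia | auto | auto | apply Hbz; lia | auto |].
    exists (shift_pt w k t); split; [auto | split; [auto | split; [| split]]].
    + intros j Hj; rewrite shift_pt_other by lia; apply Hwy; lia.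
    + intros j Hj; destruct (Nat.eq_dec j k) as [-> | Hne].
      * rewrite shift_pt_same; auto.
      * rewrite shift_pt_other by auto; apply Hwz; lia.
    + rewrite Hwy, (Rabs_minus_sym (z k)) in Hft by lia.
      assert (M * (Rabs (y k - z k) + eta) <= M * (rho + eta))
        by (apply Rmult_le_compat_l; [auto | pose proof (Hrho k ltac:(lia)); lra]).
      replace (ratio p q (shift_pt w k t) - ratio p q y)
        with ((ratio p q (shift_pt w k t) - ratio p q w) + (ratio p q w - ratio p q y)) by ring.
      rewrite S_INR, (Rmult_plus_distr_r (INR k)), Rmult_1_l, Rmult_plus_distr_r.
      eapply Rle_trans; [apply Rabs_triang | lra].
Qed.

End Staircase.

Hypothesis Hg : forall i, (i < n)%nat -> continuous_Rn n (g i).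

Lemma ratio_locally_lipschitz : locally_lipschitz_on n (fun y => q y <> 0) (ratio p q).
Proof.
  intros x; destruct (locally_bounded_family n g x Hg) as [d [M [Hd [HM0 HM]]]].
  assert (HnM : 0 <= INR n * M) by (apply Rmult_le_pos; [apply pos_INR | auto]).
  exists d, (INR n * M); split; [auto | split; [auto|]].
  intros y z rho Hy Hz Hby Hbz Hrho.
  apply (le_epsilon_scaled _ _ (INR n * M + 1)); [lra|]; intros eps Heps.
  assert (Hcz := proj1 (filterlim_box_nbhd n (ratio p q) z)
    (filterlim_div n p q z Hz (filterlim_poly n p z Hp) (filterlim_poly n q z Hq))).
  destruct (Hcz eps Heps) as [dz [Hdz Hfz]].
  destruct (ratio_staircase x d M HM0 HM y z rho (Rmin eps dz) Hy Hby Hbz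
      (Rmin_pos _ _ Heps Hdz) Hrho n (le_n n)) as [w [_ [_ [_ [Hwz Hfw]]]]].
  assert (Hw : Rabs (ratio p q w - ratio p q z) < eps)
    by (apply Hfz; intros j Hj; eapply Rlt_le_trans; [apply Hwz; auto | apply Rmin_r]).
  assert (INR n * M * (rho + Rmin eps dz) <= INR n * M * rho + INR n * M * eps)
    by (rewrite <- Rmult_plus_distr_l; apply Rmult_le_compat_l; [auto | pose proof (Rmin_l eps dz); lra]).
  replace (ratio p q y - ratio p q z)
    with (- (ratio p q w - ratio p q y) + (ratio p q w - ratio p q z)) by ring.
  eapply Rle_trans; [apply Rabs_triang|]; rewrite Rabs_Ropp; lra.
Qed.

End RatioAlongLines.

Lemma locally_lipschitz_on_continuous n D f x : locally_lipschitz_on n D f -> D x ->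
  forall eps, 0 < eps -> exists d, 0 < d /\ forall y, D y -> box n x d y -> Rabs (f y - f x) < eps.
Proof.
  intros Hf Hx eps Heps; destruct (Hf x) as [d [K [Hd [HK Hlip]]]].
  set (r := Rmin d (eps / (K + 1))).
  assert (Hr : 0 < r) by (apply Rmin_pos; [auto | apply Rdiv_lt_0_compat; lra]).
  exists r; split; auto; intros y Hy Hb.
  eapply Rle_lt_trans; [apply (Hlip y x r); auto|].
  - eapply box_mono; [apply Rmin_l | exact Hb].
  - intros j Hj; rewrite Rminus_diag, Rabs_R0; auto.
  - intros j Hj; left; apply Hb; auto.
  - eapply Rle_lt_trans; [apply Rmult_le_compat_l; [auto | apply Rmin_r] | apply Rmult_frac_lt; auto].
Qed.

Section LipschitzExtension.

Variables (n : nat) (D : pt -> Prop) (f : pt -> R).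
Hypothesis HD : dense_in n D.
Hypothesis Hf : locally_lipschitz_on n D f.

Definition values_near (x : pt) (A : R -> Prop) : Prop :=
  exists d, 0 < d /\ forall y, D y -> box n x d y -> A (f y).

Lemma values_near_proper x : ProperFilter (values_near x).
Proof.
  constructor.
  - intros A [d [Hd HA]]; destruct (HD x d Hd) as [y [Hy Hby]]; exists (f y); auto.
  - constructor.
    + exists 1; split; [lra | auto].
    + intros A B [d1 [Hd1 HA]] [d2 [Hd2 HB]]; exists (Rmin d1 d2); split; [apply Rmin_pos; auto|].
      intros y Hy Hb; split; [apply HA | apply HB]; auto; eapply box_mono; eauto;
        [apply Rmin_l | apply Rmin_r].
    + intros A B HAB [d [Hd HA]]; exists d; split; auto.
Qed.

Lemma values_near_cauchy x : cauchy (values_near x).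
Proof.
  intros [eps Heps]; destruct (Hf x) as [d [K [Hd [HK Hlip]]]].
  set (r := Rmin d (eps / 2 / (K + 1))).
  assert (Hr : 0 < r) by (apply Rmin_pos; [auto | apply Rdiv_lt_0_compat; lra]).
  destruct (HD x r Hr) as [y0 [Hy0 Hby0]].
  exists (f y0), r; split; [auto|]; intros y Hy Hby; change (Rabs (f y - f y0) < eps).
  apply Rle_lt_trans with (K * (2 * r)).
  - apply Hlip; auto; [eapply box_mono; [apply Rmin_l | exact Hby] |
      eapply box_mono; [apply Rmin_l | exact Hby0] |].
    intros j Hj; specialize (Hby j Hj); specialize (Hby0 j Hj).
    replace (y j - y0 j) with ((y j - x j) - (y0 j - x j)) by ring.
    eapply Rle_trans; [apply Rabs_triang|]; rewrite Rabs_Ropp; lra.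
  - replace (K * (2 * r)) with (2 * (K * r)) by ring.
    pose proof (Rmult_frac_lt K (eps / 2) HK ltac:(lra)).
    pose proof (Rmult_le_compat_l K r _ HK (Rmin_r d (eps / 2 / (K + 1)))); lra.
Qed.

Definition lipschitz_ext (x : pt) : R := lim (values_near x).

Definition lim_on_D (x : pt) (L : R) : Prop :=
  forall eps, 0 < eps -> exists d, 0 < d /\ forall y, D y -> box n x d y -> Rabs (f y - L) < eps.

Lemma lipschitz_ext_lim x : lim_on_D x (lipschitz_ext x).
Proof.
  intros eps Heps.
  destruct (complete_cauchy _ (values_near_proper x) (values_near_cauchy x) (mkposreal _ Heps))
    as [d [Hd H]].
  exists d; split; auto; intros y Hy Hb; rewrite Rabs_minus_sym; exact (H y Hy Hb).
Qed.

Lemma lim_on_D_unique x L1 L2 : lim_on_D x L1 -> lim_on_D x L2 -> L1 = L2.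
Proof.
  intros H1 H2; apply Rminus_diag_uniq, Rabs_eq_0, Rle_antisym; [|apply Rabs_pos].
  apply (le_epsilon_scaled _ _ 2); [lra|]; intros eps Heps.
  destruct (H1 eps Heps) as [d1 [Hd1 A]], (H2 eps Heps) as [d2 [Hd2 B]].
  destruct (HD x (Rmin d1 d2)) as [y [Hy Hb]]; [apply Rmin_pos; auto|].
  specialize (A y Hy (box_mono _ _ _ _ _ (Rmin_l _ _) Hb)).
  specialize (B y Hy (box_mono _ _ _ _ _ (Rmin_r _ _) Hb)).
  replace (L1 - L2) with (- (f y - L1) + (f y - L2)) by ring.
  eapply Rle_trans; [apply Rabs_triang|]; rewrite Rabs_Ropp; lra.
Qed.

Lemma lipschitz_ext_eq x : D x -> lipschitz_ext x = f x.
Proof.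
  intros Hx; apply (lim_on_D_unique x); [apply lipschitz_ext_lim|].
  intros eps Heps; apply locally_lipschitz_on_continuous; auto.
Qed.

Lemma exists_approx_in_D y r eps : 0 < r -> 0 < eps ->
  exists y', D y' /\ box n y r y' /\ Rabs (f y' - lipschitz_ext y) < eps.
Proof.
  intros Hr Heps; destruct (lipschitz_ext_lim y eps Heps) as [d [Hd Hy]].
  destruct (HD y (Rmin r d)) as [y' [Hy' Hb]]; [apply Rmin_pos; auto|].
  exists y'; split; [auto | split].
  - eapply box_mono; [apply Rmin_l | exact Hb].
  - apply Hy; auto; eapply box_mono; [apply Rmin_r | exact Hb].
Qed.

Lemma lipschitz_ext_lipschitz : locally_lipschitz_on n (fun _ => True) lipschitz_ext.
Proof.
  intros x; destruct (Hf x) as [d [K [Hd [HK Hlip]]]].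
  exists (d / 2), K; split; [lra | split; [auto|]]; intros y z rho _ _ Hby Hbz Hrho.
  apply (le_epsilon_scaled _ _ (2 * K + 2)); [lra|]; intros eps Heps.
  destruct (exists_approx_in_D y (Rmin (d / 2) eps) eps) as [y' [Hy' [Hby' Hfy]]];
    [apply Rmin_pos; lra | auto |].
  destruct (exists_approx_in_D z (Rmin (d / 2) eps) eps) as [z' [Hz' [Hbz' Hfz]]];
    [apply Rmin_pos; lra | auto |].
  assert (Hyz : Rabs (f y' - f z') <= K * (rho + 2 * eps)).
  { apply Hlip; auto.
    - replace d with (d / 2 + d / 2) by field; eapply box_trans; [exact Hby|].
      eapply box_mono; [apply Rmin_l | exact Hby'].
    - replace d with (d / 2 + d / 2) by field; eapply box_trans; [exact Hbz|].
      eapply box_mono; [apply Rmin_l | exact Hbz'].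
    - intros j Hj; specialize (Hby' j Hj); specialize (Hbz' j Hj); specialize (Hrho j Hj).
      pose proof (Rmin_r (d / 2) eps).
      replace (y' j - z' j) with ((y' j - y j) + (y j - z j) - (z' j - z j)) by ring.
      eapply Rle_trans; [apply Rabs_triang|]; eapply Rle_trans; [apply Rplus_le_compat_r, Rabs_triang|].
      rewrite Rabs_Ropp; lra. }
  replace (lipschitz_ext y - lipschitz_ext z)
    with (- (f y' - lipschitz_ext y) + (f y' - f z') + (f z' - lipschitz_ext z)) by ring.
  eapply Rle_trans; [apply Rabs_triang|]; eapply Rle_trans; [apply Rplus_le_compat_r, Rabs_triang|].
  rewrite Rabs_Ropp; lra.
Qed.

Lemma lipschitz_ext_continuous : continuous_Rn n lipschitz_ext.
Proof.
  intros x eps Heps.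
  destruct (locally_lipschitz_on_continuous n _ _ x lipschitz_ext_lipschitz I eps Heps) as [d [Hd H]].
  exists d; split; auto.
Qed.

End LipschitzExtension.

Lemma zariski_open_nonzero n r : is_poly n r -> zariski_open n (fun x => r x <> 0).
Proof.
  intros Hr; exists (fun h => h = r); split; [intros h ->; auto|].
  intros x; split; [intros H h ->; apply NNPP; auto | intros H Hx; apply Hx, H; auto].
Qed.

Definition regularized_ratio (n : nat) (p q : pt -> R) : pt -> R :=
  lipschitz_ext n (fun y => q y <> 0) (ratio p q).

Section RegularizedRatio.

Variables (n : nat) (p q : pt -> R) (g : nat -> pt -> R) (a0 : pt).
Hypothesis Hp : is_poly n p.
Hypothesis Hq : is_poly n q.
Hypothesis Ha0 : q a0 <> 0.
Hypothesis Hg : forall i, (i < n)%nat -> continuous_Rn n (g i).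
Hypothesis Hder : forall i x, (i < n)%nat -> q x <> 0 ->
  derivable_pt_lim (fun t => p (shift_pt x i t) / q (shift_pt x i t)) 0 (g i x).

Local Notation F := (regularized_ratio n p q).
Local Notation Hdense := (dense_nonroots n q a0 Hq Ha0).
Local Notation Hlip := (ratio_locally_lipschitz n p q g Hp Hq Hder Hg).

Lemma regularized_ratio_eq x : q x <> 0 -> F x = ratio p q x.
Proof. exact (lipschitz_ext_eq n _ _ Hdense Hlip x). Qed.

Lemma regularized_ratio_continuous : continuous_Rn n F.
Proof. exact (lipschitz_ext_continuous n _ _ Hdense Hlip). Qed.

Lemma regularized_ratio_rep x p' q' : is_poly n p' -> is_poly n q' -> same_rat p q p' q' ->
  q' x <> 0 -> F x = p' x / q' x.
Proof.
  intros Hp' Hq' Hsame Hx.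
  apply (lim_on_D_unique n (fun y => q y <> 0) (ratio p q) Hdense x);
    [exact (lipschitz_ext_lim n _ _ Hdense Hlip x) |].
  intros eps Heps.
  destruct (proj1 (filterlim_box_nbhd n _ x)
    (filterlim_div n p' q' x Hx (filterlim_poly n p' x Hp') (filterlim_poly n q' x Hq')) eps Heps)
    as [d1 [Hd1 H1]].
  destruct (proj1 (filterlim_box_nbhd n _ x) (filterlim_poly n q' x Hq') (Rabs (q' x)))
    as [d2 [Hd2 H2]]; [apply Rabs_pos_lt; auto|].
  exists (Rmin d1 d2); split; [apply Rmin_pos; auto|]; intros y Hy Hb.
  specialize (H1 y (box_mono _ _ _ _ _ (Rmin_l _ _) Hb)).
  specialize (H2 y (box_mono _ _ _ _ _ (Rmin_r _ _) Hb)).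
  assert (Hqy : q' y <> 0) by (intros E; rewrite E, Rminus_0_l, Rabs_Ropp in H2; lra).
  replace (ratio p q y) with (p' y / q' y); auto.
  unfold ratio; specialize (Hsame y); field_simplify_eq; auto; lra.
Qed.

Lemma regularized_ratio_line_mvi i x c e d : (i < n)%nat -> 0 < d ->
  (forall u, box n x d u -> Rabs (g i u - c) <= e) ->
  forall h, Rabs h < d / 2 -> Rabs (F (shift_pt x i h) - F x - c * h) <= e * Rabs h.
Proof.
  intros Hi Hd Hgc h Hh.
  assert (He : 0 <= e).
  { eapply Rle_trans; [apply Rabs_pos | apply Hgc]; intros j Hj; rewrite Rminus_diag, Rabs_R0; auto. }
  apply (le_epsilon_scaled _ _ (2 + e + Rabs c)); [pose proof (Rabs_pos c); lra|].
  intros eta Heta.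
  (* compare with a segment [y, y + t e_i] whose endpoints lie in [q <> 0] *)
  destruct (regularized_ratio_continuous (shift_pt x i h) eta Heta) as [d1 [Hd1 Hc1]].
  set (r := Rmin (Rmin (d1 / 2) (d / 4)) eta).
  assert (Hr : 0 < r /\ r <= d1 / 2 /\ r <= d / 4 /\ r <= eta).
  { unfold r; pose proof (Rmin_l (Rmin (d1 / 2) (d / 4)) eta).
    pose proof (Rmin_r (Rmin (d1 / 2) (d / 4)) eta).
    pose proof (Rmin_l (d1 / 2) (d / 4)); pose proof (Rmin_r (d1 / 2) (d / 4)).
    repeat split; try lra; repeat apply Rmin_pos; lra. }
  destruct (exists_approx_in_D n _ _ Hdense Hlip x r eta) as [y [Hy [Hbxy Hfy]]]; [tauto | auto |].
  destruct (exists_nonroot_on_line n q y i (h - r) (h + r)) as [t [Ht Hqt]]; auto; [lra|].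
  assert (Hth : Rabs (t - h) < r) by (apply Rabs_def1; lra).
  assert (Hmvi : Rabs (ratio p q (shift_pt y i t) - ratio p q y - c * t) <= e * Rabs t).
  { apply (ratio_line_mvi n p q g Hp Hq Hder); auto.
    intros s Hs; apply Hgc; apply box_shift_pt.
    - eapply box_mono; [|exact Hbxy]; lra.
    - pose proof (Rabs_between_0 s t Hs).
      assert (Rabs t <= Rabs h + r)
        by (replace t with (h + (t - h)) by ring; eapply Rle_trans; [apply Rabs_triang | lra]).
      specialize (Hbxy i Hi); replace (y i + s - x i) with ((y i - x i) + s) by ring.
      eapply Rle_lt_trans; [apply Rabs_triang | lra]. }
  assert (Hend : Rabs (ratio p q (shift_pt y i t) - F (shift_pt x i h)) < eta).
  { rewrite <- regularized_ratio_eq by auto; apply Hc1.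
    intros j Hj; specialize (Hbxy j Hj); destruct (Nat.eq_dec j i) as [-> | Hne].
    - rewrite !shift_pt_same; replace (y i + t - (x i + h)) with ((y i - x i) + (t - h)) by ring.
      eapply Rle_lt_trans; [apply Rabs_triang | lra].
    - rewrite !shift_pt_other by auto; lra. }
  change (lipschitz_ext n (fun y => q y <> 0) (ratio p q) x) with (F x) in Hfy.
  replace (F (shift_pt x i h) - F x - c * h) with (- (ratio p q (shift_pt y i t) - F (shift_pt x i h))
    + (ratio p q (shift_pt y i t) - ratio p q y - c * t) + (ratio p q y - F x) + c * (t - h)) by ring.
  assert (Rabs (c * (t - h)) <= Rabs c * eta)
    by (rewrite Rabs_mult; apply Rmult_le_compat_l; [apply Rabs_pos | lra]).
  assert (e * Rabs t <= e * Rabs h + e * eta).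
  { rewrite <- Rmult_plus_distr_l; apply Rmult_le_compat_l; auto.
    replace t with (h + (t - h)) by ring; eapply Rle_trans; [apply Rabs_triang | lra]. }
  eapply Rle_trans; [apply Rabs_triang|]; eapply Rle_trans; [apply Rplus_le_compat_r, Rabs_triang|].
  eapply Rle_trans; [apply Rplus_le_compat_r, Rplus_le_compat_r, Rabs_triang|].
  rewrite Rabs_Ropp; lra.
Qed.

Lemma regularized_ratio_partial i x : (i < n)%nat ->
  derivable_pt_lim (fun t => F (shift_pt x i t)) 0 (g i x).
Proof.
  intros Hi eps Heps; destruct (Hg i Hi x (eps / 2)) as [d [Hd Hgx]]; [lra|].
  assert (Hd2 : 0 < d / 2) by lra.
  exists (mkposreal _ Hd2); intros h Hh Hhd; simpl in Hhd; rewrite Rplus_0_l, shift_pt_0.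
  assert (Hmvi := regularized_ratio_line_mvi i x (g i x) (eps / 2) d Hi Hd
    (fun u Hu => Rlt_le _ _ (Hgx u Hu)) h Hhd).
  replace ((F (shift_pt x i h) - F x) / h - g i x) with ((F (shift_pt x i h) - F x - g i x * h) / h)
    by (field; auto).
  unfold Rdiv; rewrite Rabs_mult, Rabs_inv.
  assert (Hh' : 0 < Rabs h) by (apply Rabs_pos_lt; auto).
  apply (Rmult_lt_reg_r (Rabs h)); auto; rewrite Rmult_assoc, Rinv_l by lra; nra.
Qed.

End RegularizedRatio.

Theorem lemma2p13 (n : nat) (p q : pt -> R) :
  rat_rep n p q ->
  codim_ge n (pol n p q) 2 ->
  (exists g : nat -> pt -> R,
     (forall i, (i < n)%nat -> continuous_Rn n (g i)) /\
     (forall i x p' q', (i < n)%nat ->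
        is_poly n p' -> is_poly n q' -> same_rat p q p' q' -> q' x <> 0 ->
        derivable_pt_lim (fun t => p' (shift_pt x i t) / q' (shift_pt x i t)) 0
                         (g i x))) ->
  exists F : pt -> R,
    continuous_Rn n F /\
    (forall x p' q',
       is_poly n p' -> is_poly n q' -> same_rat p q p' q' -> q' x <> 0 ->
       F x = p' x / q' x) /\
    regulous1 n F.
Proof.
  intros [Hp [Hq [a0 Ha0]]] _ [g [Hg Hdg]].
  assert (Hder : forall i x, (i < n)%nat -> q x <> 0 ->
    derivable_pt_lim (fun t => p (shift_pt x i t) / q (shift_pt x i t)) 0 (g i x))
    by (intros i x Hi Hx; apply Hdg; auto; intros y; reflexivity).
  assert (Hcont := regularized_ratio_continuous n p q g a0 Hp Hq Ha0 Hg Hder).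
  assert (Hrep := regularized_ratio_rep n p q g a0 Hp Hq Ha0 Hg Hder).
  exists (regularized_ratio n p q); split; [auto | split; [auto | split]].
  - split; [auto|]; exists g; split; [auto|].
    intros i x Hi; apply (regularized_ratio_partial n p q g a0); auto.
  - exists p, q; split; [repeat split; eauto|].
    exists (fun x => q x <> 0); split; [apply zariski_open_nonzero; auto | split; [exists a0; auto|]].
    assert (Hself : same_rat p q p q) by (intros y; reflexivity).
    intros x Hx; exists p, q; repeat split; auto.
Qed.
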